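(* Let $(G,Y)$ be a finite $C$-group with $Y=C_1\sqcup\dots\sqcup C_m$, and let $Y'=C_1\sqcup\dots\sqcup C_k$ be ample. Let $G'$ be the group with generators $u_y$ ($y\in Y'$) and relations $u_z^{-1}u_yu_z=u_{z^{-1}yz}$ for all $y,z\in Y'$ (where $z^{-1}yz$ is computed in $G$), and let $i_*:G'\to G$ be the homomorphism $u_y\mapsto y$. Then the restriction of $i_*$ to $[G',G']$ is an epimorphism onto $[G,G]$.
   Context: A finite $C$-group is a pair $(G,Y)$ with $Y$ a finite conjugation-invariant subset of the group $G$, $1\notin Y$, such that $G$ has a presentation with generators the elements of $Y$ and defining relations all of the form $z^{-1}yz=y'$ ($y,y',z\in Y$). $Y=C_1\sqcup\dots\sqcup C_m$ is the decomposition into conjugacy classes of $G$. A union $Y'=C_1\sqcup\dots\sqcup C_k$ of some of these classes is ample if any two elements of $Y$ that are conjugate in $G$ are conjugate by an element of the subgroup generated by $Y'$. *)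

From Stdlib Require Import List.
Set Implicit Arguments.

Record group := Group {
  carrier :> Type;
  gmul : carrier -> carrier -> carrier;
  ginv : carrier -> carrier;
  gone : carrier;
  gmulA : forall x y z, gmul x (gmul y z) = gmul (gmul x y) z;
  gmul1l : forall x, gmul gone x = x;
  gmulVl : forall x, gmul (ginv x) x = gone }.

Arguments gmul {g} _ _.
Arguments ginv {g} _.
Arguments gone {g}.

Definition is_hom {G H : group} (f : G -> H) : Prop :=
  forall x y : G, f (gmul x y) = gmul (f x) (f y).

Definition subgroup_pred {G : group} (P : G -> Prop) : Prop :=
  P gone /\ (forall x y, P x -> P y -> P (gmul x y)) /\ (forall x, P x -> P (ginv x)).

Definition generated {G : group} (S : G -> Prop) (x : G) : Prop :=
  forall P : G -> Prop, subgroup_pred P -> (forall s, S s -> P s) -> P x.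

Definition conjg {G : group} (y z : G) : G := gmul (gmul (ginv z) y) z.
Definition commg {G : group} (a b : G) : G := gmul (gmul (ginv a) (ginv b)) (gmul a b).

Definition derived {G : group} : G -> Prop :=
  generated (fun c : G => exists a b : G, c = commg a b).

Definition finite_subset {G : group} (Y : G -> Prop) : Prop :=
  exists s : list G, forall x, Y x <-> In x s.

Definition conj_invariant {G : group} (Y : G -> Prop) : Prop :=
  forall y g : G, Y y -> Y (conjg y g).

Definition conj_relations_hold {G H : group} (Y : G -> Prop) (f : G -> H) : Prop :=
  forall y z : G, Y y -> Y z -> conjg (f y) (f z) = f (conjg y z).

(* (H, u) is the group presented by generators u_y (y in Y) and the relations
   u_z^{-1} u_y u_z = u_{z^{-1} y z} (y, z in Y): u satisfies the relations, the
   u_y generate H, and H has the universal property of the presentation. *)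
Definition presents_by_conj_relations {G : group} (Y : G -> Prop) (H : group) (u : G -> H)
  : Prop :=
  conj_relations_hold Y u /\
  (forall h : H, generated (fun x : H => exists y, Y y /\ x = u y) h) /\
  (forall (K : group) (f : G -> K), conj_relations_hold Y f ->
     exists phi : H -> K, is_hom phi /\ forall y, Y y -> phi (u y) = f y).

Definition is_finite_C_group {G : group} (Y : G -> Prop) : Prop :=
  finite_subset Y /\ conj_invariant Y /\ ~ Y gone /\
  presents_by_conj_relations Y G (fun x : G => x).

Definition ample {G : group} (Y Y' : G -> Prop) : Prop :=
  forall y1 y2 : G, Y y1 -> Y y2 -> (exists g : G, y2 = conjg y1 g) ->
    exists g : G, generated Y' g /\ y2 = conjg y1 g.

(* Let N be the image of [G',G'] in G.  Conjugation by any g in G lifts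
   through the presentation of G' (Y' is conjugation invariant), so N is normal.
   For y in Y and y' in Y', the element a = y^-1 y' y lies in Y' and is
   conjugate to y', so by ampleness y' = a^k with k in <Y'> = i_*(G'); then
   [y, y'] = a^-1 a^k is the image of a commutator of G'.  Ampleness again
   writes every conjugate y^b (y in Y) as y^h with h in <Y'>, so
   [y, b] = [y, h] lies in N.  As Y generates G, all commutators of G lie in N. *)


Section GroupLaws.
Variable G : group.
Implicit Types x y : G.

Lemma mulgV x : gmul x (ginv x) = gone.
Proof.
  rewrite <- (gmul1l _ (gmul x (ginv x))), <- (gmulVl _ (ginv x)) at 1.
  rewrite <- gmulA, (gmulA _ (ginv x) x (ginv x)), gmulVl, gmul1l.
  apply gmulVl.
Qed.

Lemma mulg1 x : gmul x gone = x.
Proof. rewrite <- (gmulVl _ x), gmulA, mulgV, gmul1l. reflexivity. Qed.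

Lemma invg_unique x y : gmul x y = gone -> ginv x = y.
Proof.
  intro Hxy. rewrite <- (mulg1 (ginv x)), <- Hxy, gmulA, gmulVl, gmul1l. reflexivity.
Qed.

Lemma invgK x : ginv (ginv x) = x.
Proof. apply invg_unique, gmulVl. Qed.

Lemma invMg x y : ginv (gmul x y) = gmul (ginv y) (ginv x).
Proof.
  apply invg_unique. rewrite gmulA, <- (gmulA _ x y), mulgV, mulg1, mulgV. reflexivity.
Qed.

Lemma invg1 : ginv (@gone G) = gone.
Proof. apply invg_unique, gmul1l. Qed.

Lemma mulgKV x y : gmul (gmul x (ginv y)) y = x.
Proof. rewrite <- gmulA, gmulVl, mulg1. reflexivity. Qed.

Lemma mulgK x y : gmul (gmul x y) (ginv y) = x.
Proof. rewrite <- gmulA, mulgV, mulg1. reflexivity. Qed.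

End GroupLaws.

(* Closes identities between words that agree after free reduction. *)
Ltac group_simpl := unfold conjg, commg in *;
  repeat progress (rewrite ?invMg, ?invgK, ?invg1, ?gmulA, ?mulgKV, ?mulgK,
     ?gmulVl, ?mulgV, ?gmul1l, ?mulg1).

Section Homomorphisms.
Variables G H : group.
Variable f : G -> H.
Hypothesis f_hom : is_hom f.

Lemma hom1 : f gone = gone.
Proof.
  assert (Hsq : f gone = gmul (f gone) (f gone)) by (rewrite <- f_hom, gmul1l; reflexivity).
  transitivity (gmul (ginv (f gone)) (gmul (f gone) (f gone))).
  - rewrite gmulA, gmulVl, gmul1l. reflexivity.
  - rewrite <- Hsq. apply gmulVl.
Qed.

Lemma homV x : f (ginv x) = ginv (f x).
Proof. symmetry. apply invg_unique. rewrite <- f_hom, mulgV. apply hom1. Qed.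

Lemma hom_commg x y : f (commg x y) = commg (f x) (f y).
Proof. unfold commg. rewrite !f_hom, !homV. reflexivity. Qed.

End Homomorphisms.

Arguments hom1 {G H f} f_hom.
Arguments homV {G H f} f_hom x.
Arguments hom_commg {G H f} f_hom x y.

Definition image_of {G H : group} (f : G -> H) (P : G -> Prop) (x : H) : Prop :=
  exists h, P h /\ f h = x.

Lemma generated_subgroup (G : group) (S : G -> Prop) : subgroup_pred (generated S).
Proof.
  repeat split.
  - intros P [P1 _] _. exact P1.
  - intros x y Hx Hy P HP HS. destruct HP as (P1 & PM & PV).
    apply PM; [apply Hx | apply Hy]; repeat split; auto.
  - intros x Hx P HP HS. destruct HP as (P1 & PM & PV).
    apply PV, Hx; repeat split; auto.
Qed.

Lemma generated_in (G : group) (S : G -> Prop) x : S x -> generated S x.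
Proof. intros Hx P _ HS. auto. Qed.

Lemma derived_commg (G : group) (a b : G) : derived (commg a b).
Proof. apply generated_in. eauto. Qed.

Lemma subgroup_image (G H : group) (f : G -> H) (P : G -> Prop) :
  is_hom f -> subgroup_pred P -> subgroup_pred (image_of f P).
Proof.
  intros f_hom (P1 & PM & PV). repeat split.
  - exists gone. split; [exact P1 | apply (hom1 f_hom)].
  - intros x y (a & Pa & <-) (b & Pb & <-). exists (gmul a b). auto.
  - intros x (a & Pa & <-). exists (ginv a). split; [auto | apply (homV f_hom)].
Qed.

Lemma hom_derived (G H : group) (f : G -> H) x :
  is_hom f -> derived x -> derived (f x).
Proof.
  intros f_hom Hx.
  assert (Hsub : subgroup_pred (fun x => derived (f x))).
  { destruct (generated_subgroup H (fun c : H => exists a b : H, c = commg a b))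
      as (D1 & DM & DV).
    repeat split.
    - rewrite (hom1 f_hom). exact D1.
    - intros a b Ha Hb. rewrite f_hom. exact (DM _ _ Ha Hb).
    - intros a Ha. rewrite (homV f_hom). exact (DV _ Ha). }
  apply Hx; [exact Hsub |].
  intros s (a & b & ->). rewrite (hom_commg f_hom). apply derived_commg.
Qed.

Section NormalCommutators.
Variable G : group.
Variable N : G -> Prop.
Hypothesis N_subgroup : subgroup_pred N.
Hypothesis N_normal : forall x g, N x -> N (conjg x g).

Lemma commgr_subgroup a : subgroup_pred (fun b => N (commg a b)).
Proof.
  destruct N_subgroup as (N1 & NM & NV). repeat split.
  - replace (commg a gone) with (@gone G) by (group_simpl; reflexivity). auto.
  - intros x y Hx Hy.
    replace (commg a (gmul x y)) with (gmul (commg a y) (conjg (commg a x) y))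
      by (group_simpl; reflexivity). auto.
  - intros x Hx.
    replace (commg a (ginv x)) with (ginv (conjg (commg a x) (ginv x)))
      by (group_simpl; reflexivity). auto.
Qed.

Lemma commgl_subgroup : subgroup_pred (fun a => forall b, N (commg a b)).
Proof.
  destruct N_subgroup as (N1 & NM & NV). repeat split.
  - intro b. replace (commg gone b) with (@gone G) by (group_simpl; reflexivity). auto.
  - intros x y Hx Hy b.
    replace (commg (gmul x y) b) with (gmul (conjg (commg x b) y) (commg y b))
      by (group_simpl; reflexivity). auto.
  - intros x Hx b.
    replace (commg (ginv x) b) with (ginv (conjg (commg x b) (ginv x)))
      by (group_simpl; reflexivity). auto.
Qed.

End NormalCommutators.

Section Presentation.
Variables G G' : group.
Variable Y' : G -> Prop.
Variable u : G -> G'.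
Variable istar : G' -> G.
Hypothesis Y'_conj : conj_invariant Y'.
Hypothesis u_rel : conj_relations_hold Y' u.
Hypothesis u_gen : forall h : G', generated (fun x => exists y, Y' y /\ x = u y) h.
Hypothesis u_univ : forall (K : group) (f : G -> K), conj_relations_hold Y' f ->
  exists phi : G' -> K, is_hom phi /\ forall y, Y' y -> phi (u y) = f y.
Hypothesis istar_hom : is_hom istar.
Hypothesis istar_u : forall y, Y' y -> istar (u y) = y.

Lemma istar_onto_generated k : generated Y' k -> exists k', istar k' = k.
Proof.
  intro Hk.
  assert (Himg : subgroup_pred (image_of istar (fun _ => True))).
  { apply subgroup_image; [exact istar_hom | repeat split]. }
  destruct (Hk _ Himg) as (k' & _ & <-); [| eauto].
  intros s Hs. exists (u s). auto.
Qed.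

Lemma conjg_lift g :
  exists phi : G' -> G', is_hom phi /\ forall h, istar (phi h) = conjg (istar h) g.
Proof.
  destruct (u_univ G' (fun a => u (conjg a g))) as (phi & phi_hom & phi_u).
  { intros a b Ha Hb. rewrite u_rel by auto. f_equal. group_simpl. reflexivity. }
  exists phi. split; [exact phi_hom |].
  intro h. apply (u_gen h).
  - repeat split.
    + rewrite (hom1 phi_hom), (hom1 istar_hom). group_simpl. reflexivity.
    + intros a b Ea Eb. rewrite phi_hom, !istar_hom, Ea, Eb. group_simpl. reflexivity.
    + intros a Ea. rewrite (homV phi_hom), !(homV istar_hom), Ea.
      group_simpl. reflexivity.
  - intros s (y & Hy & ->). rewrite phi_u, !istar_u; auto.
Qed.

Lemma image_derived_subgroup : subgroup_pred (image_of istar derived).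
Proof. apply subgroup_image; [exact istar_hom | apply generated_subgroup]. Qed.

Lemma image_derived_normal x g :
  image_of istar derived x -> image_of istar derived (conjg x g).
Proof.
  intros (h & Hh & <-). destruct (conjg_lift g) as (phi & phi_hom & phi_lift).
  exists (phi h). split; [apply hom_derived; auto | apply phi_lift].
Qed.

Lemma u_conjg k a : Y' a -> u (conjg a (istar k)) = conjg (u a) k.
Proof.
  revert a. apply (u_gen k).
  - repeat split.
    + intros a Ha. rewrite (hom1 istar_hom). group_simpl. reflexivity.
    + intros x y Ex Ey a Ha. rewrite istar_hom.
      replace (conjg a (gmul (istar x) (istar y)))
        with (conjg (conjg a (istar x)) (istar y)) by (group_simpl; reflexivity).
      rewrite Ey, Ex by auto. group_simpl. reflexivity.
    + intros x Ex a Ha.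
      set (b := conjg a (ginv (istar x))).
      specialize (Ex b (Y'_conj _ _ Ha)).
      replace (conjg b (istar x)) with a in Ex by (unfold b; group_simpl; reflexivity).
      rewrite (homV istar_hom), Ex. unfold b. group_simpl. reflexivity.
  - intros s (z & Hz & ->) a Ha. rewrite istar_u by auto. symmetry. apply u_rel; auto.
Qed.

Variable Y : G -> Prop.
Hypothesis Y_conj : conj_invariant Y.
Hypothesis Y'_sub : forall x, Y' x -> Y x.
Hypothesis Y'_ample : ample Y Y'.

Lemma commg_Y_Y'_image y y' :
  Y y -> Y' y' -> image_of istar derived (commg y y').
Proof.
  intros Hy Hy'.
  set (a := conjg y' y).
  assert (Ha : Y' a) by (apply Y'_conj; auto).
  destruct (Y'_ample a y' (Y'_sub _ Ha) (Y'_sub _ Hy')) as (k & Hk & Ek).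
  { exists (ginv y). unfold a. group_simpl. reflexivity. }
  destruct (istar_onto_generated k Hk) as (k' & <-).
  exists (commg (u a) k'). split; [apply derived_commg |].
  rewrite (hom_commg istar_hom), istar_u by auto.
  replace (commg a (istar k')) with (gmul (ginv a) (conjg a (istar k')))
    by (group_simpl; reflexivity).
  rewrite <- Ek. unfold a. group_simpl. reflexivity.
Qed.

Lemma commg_Y_image y b : Y y -> image_of istar derived (commg y b).
Proof.
  intro Hy.
  destruct (Y'_ample y (conjg y b) Hy (Y_conj y b Hy)) as (h & Hh & Eh); [eauto |].
  replace (commg y b) with (gmul (ginv y) (conjg y b)) by (group_simpl; reflexivity).
  rewrite Eh.
  replace (gmul (ginv y) (conjg y h)) with (commg y h) by (group_simpl; reflexivity).
  apply Hh.
  - apply commgr_subgroup; [exact image_derived_subgroup | exact image_derived_normal].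
  - intros s Hs. apply commg_Y_Y'_image; auto.
Qed.

Hypothesis Y_gen : forall g : G, generated (fun x => exists y, Y y /\ x = y) g.

Lemma derived_image g : derived g -> image_of istar derived g.
Proof.
  assert (Hcommg : forall a b, image_of istar derived (commg a b)).
  { intro a. apply (Y_gen a).
    - apply commgl_subgroup; [exact image_derived_subgroup | exact image_derived_normal].
    - intros s (y & Hy & ->) b. apply commg_Y_image, Hy. }
  intro Hg. apply Hg; [exact image_derived_subgroup |].
  intros s (a & b & ->). apply Hcommg.
Qed.

End Presentation.

Theorem proposition2p19 (G : group) (Y Y' : G -> Prop) (G' : group)
  (u : G -> G') (istar : G' -> G) :
  is_finite_C_group Y ->
  (forall x, Y' x -> Y x) -> conj_invariant Y' ->
  ample Y Y' ->
  presents_by_conj_relations Y' G' u ->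
  is_hom istar -> (forall y, Y' y -> istar (u y) = y) ->
  forall g : G, @derived G g <-> exists h : G', @derived G' h /\ istar h = g.
Proof.
  intros (_ & Y_conj & _ & _ & Y_gen & _) Y'_sub Y'_conj Y'_ample
    (u_rel & u_gen & u_univ) istar_hom istar_u g.
  split.
  - apply (derived_image G G' Y' u istar Y'_conj u_rel u_gen u_univ istar_hom istar_u Y);
      assumption.
  - intros (h & Hh & <-). apply hom_derived; assumption.
Qed.
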